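(* Let $\mathcal{N}$ be a Beeping Network with $n$ nodes and maximum degree $\Delta$, where each node has a unique ID from $[1,n^c]$ for a constant $c\ge 1$, and each node $v$ knows $n$, the parameter $c$, the maximum degree $\Delta$, and its neighborhood $N(v)$ (the IDs of its neighbors), and holds a message $m_v$ of length at most $B>0$ bits. Then there is a deterministic distributed algorithm that solves Local Broadcast on $\mathcal{N}$ in $O(B\Delta^2\log n)$ beeping rounds.
   Context: A Beeping Network is a network of $n$ nodes whose topology is an undirected graph $G=(V,E)$; $N(v)$ denotes the set of neighbors of $v$. Time is divided into synchronous rounds and all nodes start simultaneously. In each round every node either beeps or listens; a listening node hears ''silence'' if no neighbor beeps and ''noise'' if at least one neighbor beeps, and cannot distinguish one beep from several. A beeping node receives no feedback in that round. Complexity is measured in rounds. Local Broadcast: every node $v$ holds a message $m_v$, and the problem is solved once, for every $v$, every node in $N(v)$ knows $m_v$. *)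

From mathcomp Require Import all_boot.
Set Implicit Arguments. Unset Strict Implicit. Unset Printing Implicit Defensive.

Definition simple_graph (V : finType) (e : rel V) : Prop :=
  symmetric e /\ irreflexive e.

Definition nbhd (V : finType) (e : rel V) (v : V) : {set V} := [set u | e v u].

Definition max_degree (V : finType) (e : rel V) : nat :=
  \max_(v : V) #|nbhd e v|.

Record Knowledge := mkKnowledge {
  k_n : nat; k_c : nat; k_Delta : nat; k_id : nat;
  k_nbr_ids : seq nat; k_msg : seq bool }.

(* The local history of a node
   is the sequence of what it heard in each past round (true = noise,
   false = silence; in rounds where the node beeped, it gets no feedback and
   false is recorded -- the node can recompute its own past actions anyway).
   - [act k h] : does the node beep in the next round?
   - [out k h j] : the node's current value for the message of its neighbour
     with ID j. *)
Record BeepAlgorithm := mkBeepAlgorithm {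
  act : Knowledge -> seq bool -> bool;
  out : Knowledge -> seq bool -> nat -> seq bool }.

Section Execution.
Variables (V : finType) (e : rel V) (know : V -> Knowledge) (A : BeepAlgorithm).

Fixpoint history (t : nat) : V -> seq bool :=
  match t with
  | 0 => fun _ => [::]
  | t'.+1 => fun v =>
      let h := history t' in
      let beeps u := act A (know u) (h u) in
      rcons (h v) (if beeps v then false else [exists u, e v u && beeps u])
  end.
End Execution.

Definition knowledge_of (V : finType) (e : rel V) (n c Delta : nat)
  (id : V -> nat) (m : V -> seq bool) (v : V) : Knowledge :=
  mkKnowledge n c Delta (id v) (sort leq [seq id u | u <- enum (nbhd e v)]) (m v).

Definition solves_local_broadcast_in (A : BeepAlgorithm) (V : finType) (e : rel V)
  (n c Delta : nat) (id : V -> nat) (m : V -> seq bool) (T : nat) : Prop :=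
  forall v u : V, e v u ->
    out A (knowledge_of e n c Delta id m u)
          (history e (knowledge_of e n c Delta id m) A T u) (id v) = m v.

(* Node v can deliver a bit to its neighbour u in any round in which v beeps
   while u and all other neighbours of u are silent.  Such rounds come from a
   schedule of t colourings of the ID space with D = 2Δ+1 colours, a node being
   allowed to beep in slot j only if its ID has colour 0 there.  The schedule
   is selective if for every ID x and every Δ IDs different from x some slot
   colours x with 0 and the others with nonzero colours.  A uniformly random
   colouring achieves this for a fixed x and y with probability at least
   (1/D)(1 - 1/D)^Δ >= 1/2D, so a union bound over the (n^c+1)^(Δ+1) choices
   shows that a selective schedule of length t = O(Δ^2 log n) exists; every
   node knows n, c and Δ and so computes the same one.  Repeating the frame for
   each of the 2B+1 bits of a self-delimiting encoding of the messages, node u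
   hears the bits of m_v in the slot isolating v from u's other neighbours. *)

From mathcomp Require Import all_boot zify.
Set Implicit Arguments. Unset Strict Implicit. Unset Printing Implicit Defensive.

Lemma expnS_bernoulli a k : a ^ k.+1 + k.+1 * a ^ k <= a.+1 ^ k.+1.
Proof.
elim: k => [|k IH]; first by rewrite expn1 expn0 mul1n addn1.
rewrite [a.+1 ^ k.+2]expnS; apply: leq_trans (leq_mul (leqnn a.+1) IH).
rewrite !expnS; nia.
Qed.

Lemma expn_pred_half M : 0 < M -> 2 * M.-1 ^ M <= M ^ M.
Proof.
case: M => [|M] // _; have := expnS_bernoulli M M.
rewrite /= expnS; set X := M ^ M; nia.
Qed.

Lemma expn_pred_bernoulli D a : a <= D -> D ^ a * (D - a) <= D.-1 ^ a * D.
Proof.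
elim: a => [|a IH] le_aD; first by rewrite !expn0 subn0 mul1n.
have {IH} := IH (ltnW le_aD); rewrite !expnS.
set X := D ^ a; set Y := D.-1 ^ a => IH.
have : X * (D - a) * D.-1 <= Y * D * D.-1 by rewrite leq_mul2r IH orbT.
have : D * (D - a.+1) <= (D - a) * D.-1 by nia.
nia.
Qed.

Lemma expn_le_double_pred D a : a.*2 <= D -> D ^ a <= 2 * D.-1 ^ a.
Proof.
move=> le_2aD; have le_aD : a <= D by lia.
have := expn_pred_bernoulli le_aD; case: D le_2aD {le_aD} => [|D] le_2aD.
  by move: le_2aD; rewrite leqn0 double_eq0 => /eqP ->.
set X := D.+1 ^ a; set Y := D.+1.-1 ^ a => bern.
rewrite -(@leq_pmul2r D.+1) //; nia.
Qed.

Lemma ltn_mul_expn_pred N M k : 1 < M -> N < 2 ^ k -> N * M.-1 ^ (M * k) < M ^ (M * k).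
Proof.
move=> M_gt1 N_lt; have M1_gt0 : 0 < M.-1 by lia.
apply: leq_trans (_ : 2 ^ k * M.-1 ^ (M * k) <= _).
  by rewrite ltn_mul2r N_lt expn_gt0 M1_gt0.
rewrite !expnM -expnMn; elim: k {N_lt} => // k IH.
by rewrite !expnS leq_mul // expn_pred_half // ltnW.
Qed.

Lemma leq_card_bigcup (I T : finType) (P : pred I) (A : I -> {set T}) :
  #|\bigcup_(i | P i) A i| <= \sum_(i | P i) #|A i|.
Proof.
elim/big_rec2: _ => [|i n U _ le_Un]; first by rewrite cards0.
by apply: leq_trans (leq_card_setU _ _) _; rewrite leq_add2l.
Qed.

Section Isolation.
Variables (T : finType) (D : nat).

Definition isolates (f : {ffun T -> 'I_D}) (x : T) (s : seq T) : bool :=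
  (f x == 0 :> nat) && all (fun z => f z != 0 :> nat) s.

Lemma card_isolates x s : 0 < D -> (size s).*2 <= D -> x \notin s ->
  D ^ #|T| <= 2 * D * #|[set f | isolates f x s]|.
Proof.
move=> D_gt0 le_sD x_s.
pose zero := [pred k : 'I_D | val k == 0].
pose colors z := if z == x then zero else if z \in s then [predC zero] else predT.
have sub_iso : family colors \subset [set f | isolates f x s].
  apply/subsetP => f /familyP f_col; rewrite inE; apply/andP; split.
    by have := f_col x; rewrite /colors eqxx.
  apply/allP => z z_s; have z_x : z != x by apply: contraNneq x_s => <-.
  by have := f_col z; rewrite /colors (negbTE z_x) z_s.
have card_zero : #|zero| = 1.
  by rewrite -(card1 (Ordinal D_gt0)); apply: eq_card => k; rewrite !inE.
have card_nonzero : #|[predC zero]| = D.-1.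
  by apply: succn_inj; rewrite prednK // -add1n -card_zero cardC card_ord.
apply: leq_trans (leq_mul (leqnn _) (subset_leq_card sub_iso)).
rewrite card_family foldrE big_map big_enum /= -mulnA.
have -> : D * \prod_z #|colors z| = \prod_z (if z \in s then D.-1 else D).
  rewrite (bigD1 x) //= [in RHS](bigD1 x) //= /colors eqxx card_zero.
  rewrite (negbTE x_s) mul1n.
  congr (_ * _); apply: eq_bigr => z /negbTE ->.
  by case: (z \in s); rewrite ?card_nonzero //; exact: card_ord.
rewrite (bigID (mem s)) /= (eq_bigr (fun=> D.-1)) => [|z -> //].
rewrite [X in _ * (_ * X)](eq_bigr (fun=> D)) => [|z /negbTE -> //].
rewrite (prod_nat_const (mem s)) (prod_nat_const [predC s]) mulnA.
rewrite -(cardC (mem s)) expnD leq_mul2r expn_le_double_pred ?orbT //.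
by apply: leq_trans le_sD; rewrite leq_double card_size.
Qed.

Definition selective Δ t (F : {ffun 'I_t -> {ffun T -> 'I_D}}) : bool :=
  [forall x, forall y : Δ.-tuple T, (x \notin y) ==> [exists j, isolates (F j) x y]].

Lemma selective_exists Δ t : 0 < D -> Δ.*2 <= D ->
  #|T| ^ Δ.+1 * (2 * D).-1 ^ t < (2 * D) ^ t ->
  exists F : {ffun 'I_t -> {ffun T -> 'I_D}}, selective Δ F.
Proof.
move=> D_gt0 le_ΔD slack.
pose FT := {ffun 'I_t -> {ffun T -> 'I_D}}.
pose W := D ^ #|T|.
pose bad (p : T * Δ.-tuple T) :=
  [set F : FT | (p.1 \notin p.2) && [forall j, ~~ isolates (F j) p.1 p.2]].
have card_bad p : #|bad p| * (2 * D) ^ t <= ((2 * D).-1 * W) ^ t.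
  case: p => x y; case: (boolP (x \in y)) => x_y.
    by rewrite (_ : bad _ = set0) ?cards0 //; apply/setP => F; rewrite !inE x_y.
  pose G := [set f | isolates f x y].
  have -> : #|bad (x, y)| = #|~: G| ^ t.
    rewrite -[t in RHS]card_ord -card_ffun_on; apply: eq_card => F.
    rewrite !inE x_y; apply/forallP/ffun_onP => F_bad j; have := F_bad j; rewrite !inE //.
  have le_base : #|~: G| * (2 * D) <= (2 * D).-1 * W.
    have := card_isolates D_gt0 _ x_y; rewrite size_tuple => /(_ le_ΔD).
    have := cardsC G; rewrite card_ffun !card_ord -/W -/G; nia.
  case: (posnP t) => [->|t_gt0]; first by rewrite !expn0.
  by rewrite -expnMn leq_exp2r.
have [F] : exists F, F \notin \bigcup_p bad p.
  suff /card_gt0P[F] : 0 < #|~: \bigcup_p bad p| by rewrite inE; exists F.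
  rewrite -(ltn_add2l #|\bigcup_p bad p|) addn0 cardsC.
  rewrite -(@ltn_pmul2r ((2 * D) ^ t)) ?expn_gt0 ?muln_gt0 ?D_gt0 //.
  apply: leq_ltn_trans (leq_mul (leq_card_bigcup _ _) (leqnn _)) _.
  rewrite big_distrl /=; apply: (@leq_ltn_trans (\sum_p ((2 * D).-1 * W) ^ t)).
    by apply: leq_sum => p _; exact: card_bad.
  rewrite sum_nat_const card_prod card_tuple -expnS expnMn mulnA.
  by rewrite card_ffun card_ffun !card_ord -/W mulnC ltn_pmul2l ?expn_gt0 ?D_gt0.
move=> F_good; exists F; apply/forallP => x; apply/forallP => y; apply/implyP => x_y.
have : F \notin bad (x, y) by apply: contra F_good => F_bad; apply/bigcupP; exists (x, y).
rewrite inE x_y negb_forall => /existsP[j].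
by rewrite negbK => iso; apply/existsP; exists j.
Qed.

Lemma selective_seq Δ t (F : {ffun 'I_t -> {ffun T -> 'I_D}}) x s :
  selective Δ F -> 0 < size s <= Δ -> x \notin s -> exists j, isolates (F j) x s.
Proof.
case: s => [|z s] // sel /andP[_ le_sΔ] x_s.
pose y := z :: s ++ nseq (Δ - size (z :: s)) z.
have size_y : size y == Δ.
  by rewrite /= size_cat size_nseq; apply/eqP; move: le_sΔ => /=; lia.
have x_y : x \notin Tuple size_y.
  move: x_s; rewrite /= !inE mem_cat mem_nseq negb_or.
  by case/andP=> /negbTE-> /negbTE->; rewrite andbF.
have /existsP[j iso] := implyP (forallP (forallP sel x) (Tuple size_y)) x_y.
by exists j; move: iso; rewrite /isolates /= all_cat => /and3P[-> -> /andP[->]].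
Qed.
End Isolation.

(* Nodes do not know B, so each bit is preceded by a continuation flag. *)
Fixpoint encode_bits (m : seq bool) : seq bool :=
  if m is b :: m' then true :: b :: encode_bits m' else [:: false].

Fixpoint decode_bits (fuel : nat) (g : nat -> bool) : seq bool :=
  if fuel is f.+1 then
    if g 0 then g 1 :: decode_bits f (fun k => g k.+2) else [::]
  else [::].

Lemma size_encode_bits m : size (encode_bits m) = (size m).*2.+1.
Proof. by elim: m => [|b m IH] //=; rewrite IH doubleS. Qed.

Lemma decode_encode_bits m fuel g : size m < fuel ->
  (forall k, k < size (encode_bits m) -> g k = nth false (encode_bits m) k) ->
  decode_bits fuel g = m.
Proof.
elim: m fuel g => [|b m IH] [|f] g //= lt_mf g_enc; first by rewrite g_enc.
rewrite !g_enc //=; congr (_ :: _); apply: IH => // k lt_k; exact: g_enc.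
Qed.

Section Execution.
Variables (V : finType) (e : rel V) (kn : V -> Knowledge) (A : BeepAlgorithm).

Lemma size_history r v : size (history e kn A r v) = r.
Proof. by elim: r v => [|r IH] v //=; rewrite size_rcons IH. Qed.

Lemma nth_history_single_beeper T r u v : r < T -> e u v ->
  ~~ act A (kn u) (history e kn A r u) ->
  (forall w, e u w -> w != v -> ~~ act A (kn w) (history e kn A r w)) ->
  nth false (history e kn A T u) r = act A (kn v) (history e kn A r v).
Proof.
move=> lt_rT e_uv silent_u silent_nbrs.
elim: T lt_rT => // T IH; rewrite ltnS leq_eqVlt => /orP[/eqP <- | lt_rT] /=.
  rewrite nth_rcons size_history ltnn eqxx (negbTE silent_u).
  apply/existsP/idP => [[w /andP[e_uw beep_w]] | beep_v]; last by exists v; rewrite e_uv.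
  case: (eqVneq w v) => [<- // | w_v].
  by move: beep_w; rewrite (negbTE (silent_nbrs w e_uw w_v)).
by rewrite nth_rcons size_history lt_rT IH.
Qed.
End Execution.

Definition num_colors Δ := (Δ.*2).+1.

(* With M = 2 * num_colors Δ, a frame of M * k slots misses a fixed pair with
   probability at most (1 - 1/M)^(M k) <= 2^-k, and 2^k exceeds the number
   (n^c + 1)^(Δ+1) of pairs. *)
Definition frame_length n c Δ := 2 * num_colors Δ * ((c * up_log 2 n + 2) * Δ.+1).

Lemma frame_length_gt0 n c Δ : 0 < frame_length n c Δ.
Proof. by rewrite /frame_length /num_colors; lia. Qed.

Lemma frame_length_slack n c Δ :
  (n ^ c).+1 ^ Δ.+1 * (2 * num_colors Δ).-1 ^ frame_length n c Δ
  < (2 * num_colors Δ) ^ frame_length n c Δ.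
Proof.
apply: ltn_mul_expn_pred; first by rewrite /num_colors; lia.
rewrite expnM ltn_exp2r // expnD.
have : n ^ c <= 2 ^ (c * up_log 2 n).
  by rewrite mulnC expnM; case: c => [|c] //; rewrite leq_exp2r // up_logP.
by have := expn_gt0 2 (c * up_log 2 n); lia.
Qed.

Lemma schedule_exists n c Δ : exists F :
  {ffun 'I_(frame_length n c Δ) -> {ffun 'I_(n ^ c).+1 -> 'I_(num_colors Δ)}},
  selective Δ F.
Proof.
by apply: selective_exists; rewrite ?card_ord ?frame_length_slack // /num_colors.
Qed.

Definition schedule n c Δ := xchoose (schedule_exists n c Δ).

Definition slot_of n c Δ r : 'I_(frame_length n c Δ) :=
  Ordinal (ltn_pmod r (frame_length_gt0 n c Δ)).

Definition beeps n c Δ (self : nat) (msg : seq bool) (r : nat) : bool :=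
  (schedule n c Δ (slot_of n c Δ r) (inord self) == 0 :> nat)
  && nth false (encode_bits msg) (r %/ frame_length n c Δ).

(* The listener is among the interferers: a beeping node hears nothing. *)
Definition interferers (self : nat) (nbrs : seq nat) (j : nat) : seq nat :=
  self :: filter (predC1 j) nbrs.

Definition listen_slot n c Δ (self : nat) (nbrs : seq nat) (j : nat) :=
  [pick s | isolates (schedule n c Δ s) (inord j) (map inord (interferers self nbrs j))].

Definition local_broadcast : BeepAlgorithm := mkBeepAlgorithm
  (fun kn h => beeps (k_n kn) (k_c kn) (k_Delta kn) (k_id kn) (k_msg kn) (size h))
  (fun kn h j =>
     if listen_slot (k_n kn) (k_c kn) (k_Delta kn) (k_id kn) (k_nbr_ids kn) j is Some s
     then decode_bits (size h)
            (fun k => nth false h (k * frame_length (k_n kn) (k_c kn) (k_Delta kn) + s))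
     else [::]).

Section Correctness.
Variables (V : finType) (e : rel V) (n c Δ : nat) (id : V -> nat) (m : V -> seq bool).
Hypotheses (e_sym : symmetric e) (e_irr : irreflexive e) (id_inj : injective id).
Hypotheses (id_le : forall w, id w <= n ^ c) (deg_le : forall w, #|nbhd e w| <= Δ).

Local Notation kn := (knowledge_of e n c Δ id m).
Local Notation hist := (history e kn local_broadcast).
Local Notation t := (frame_length n c Δ).

Lemma act_local_broadcast r w :
  act local_broadcast (kn w) (hist r w) = beeps n c Δ (id w) (m w) r.
Proof. by rewrite /= size_history. Qed.

Lemma slot_ofE k (s : 'I_t) : slot_of n c Δ (k * t + s) = s.
Proof. by apply: val_inj; rewrite /= modnMDl modn_small. Qed.

Variables (v u : V).
Hypothesis e_vu : e v u.

Local Notation L := (interferers (id u) (k_nbr_ids (kn u)) (id v)).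

Lemma mem_nbr_ids w : (id w \in k_nbr_ids (kn u)) = e u w.
Proof. by rewrite mem_sort mem_map // mem_enum inE. Qed.

Lemma size_interferers : 0 < size L <= Δ.
Proof.
rewrite /= size_filter; apply: leq_trans (deg_le u).
have -> : #|nbhd e u| = size (k_nbr_ids (kn u)) by rewrite size_sort size_map cardE.
rewrite -(count_predC (predC1 (id v))) /= -[X in X < _]addn0 ltn_add2l -has_count.
by apply/hasP; exists (id v); rewrite /= ?negbK ?mem_nbr_ids // e_sym.
Qed.

Lemma interferers_le z : z \in L -> z <= n ^ c.
Proof.
rewrite inE mem_filter => /predU1P[-> // | /andP[_]].
by rewrite mem_sort => /mapP[w _ ->].
Qed.

Lemma sender_notin_interferers : id v \notin L.
Proof.
rewrite inE mem_filter /= eqxx /= orbF (inj_eq id_inj).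
by apply: contraFneq (e_irr u) => vu; rewrite -{1}vu.
Qed.

Lemma nbr_in_interferers w : e u w -> w != v -> id w \in L.
Proof.
move=> e_uw w_v; rewrite inE mem_filter mem_nbr_ids e_uw andbT /=.
by apply/orP; right; rewrite (inj_eq id_inj).
Qed.

Lemma listen_slot_isolates : exists2 s,
  listen_slot n c Δ (id u) (k_nbr_ids (kn u)) (id v) = Some s &
  isolates (schedule n c Δ s) (inord (id v)) (map inord L).
Proof.
rewrite /listen_slot; case: pickP => [s iso | none]; first by exists s.
have sel := xchooseP (schedule_exists n c Δ).
have [||j iso] := selective_seq (x := inord (id v)) (s := map inord L) sel.
- by rewrite size_map size_interferers.
- apply/mapP => -[z z_L /(congr1 (@nat_of_ord _))].
  rewrite !inordK ?ltnS ?id_le ?interferers_le // => v_z.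
  by rewrite -v_z (negbTE sender_notin_interferers) in z_L.
by rewrite -/(schedule n c Δ) none in iso.
Qed.

Lemma hears_sender_bit (s : 'I_t) T k :
  isolates (schedule n c Δ s) (inord (id v)) (map inord L) -> k * t + s < T ->
  nth false (hist T u) (k * t + s) = nth false (encode_bits (m v)) k.
Proof.
move=> /andP[v_zero /allP L_nonzero] lt_T.
have silent z : z \in L -> (schedule n c Δ s (inord z) == 0 :> nat) = false.
  by move=> z_L; apply: negbTE; apply: L_nonzero; apply: map_f.
rewrite (nth_history_single_beeper (v := v) lt_T) ?act_local_broadcast /beeps ?slot_ofE.
- by rewrite v_zero divnMDl ?frame_length_gt0 // divn_small ?addn0.
- by rewrite e_sym.
- by rewrite silent ?mem_head.
move=> w e_uw w_v.
by rewrite act_local_broadcast /beeps slot_ofE silent ?nbr_in_interferers.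
Qed.

Lemma local_broadcast_delivers T : (size (m v)).*2.+1 * t <= T ->
  out local_broadcast (kn u) (hist T u) (id v) = m v.
Proof.
move=> le_T; have [s slot_s iso] := listen_slot_isolates.
have t_gt0 := frame_length_gt0 n c Δ.
rewrite /= slot_s; apply: decode_encode_bits => [|k].
  by rewrite size_history; apply: leq_trans le_T; nia.
rewrite size_encode_bits => lt_k; apply: hears_sender_bit => //.
apply: leq_trans le_T; apply: leq_trans (_ : k.+1 * t <= _).
  by rewrite mulSn addnC ltn_add2r.
by rewrite leq_mul2r lt_k orbT.
Qed.
End Correctness.

Lemma frame_length_bound n c Δ B : 0 < B -> 0 < Δ -> 1 < n ->
  B.*2.+1 * frame_length n c Δ <= 36 * (c + 2) * B * Δ ^ 2 * up_log 2 n.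
Proof.
move=> B_gt0 Δ_gt0 n_gt1; have : 0 < up_log 2 n by rewrite up_log_gt0 n_gt1.
rewrite /frame_length /num_colors; set l := up_log 2 n => l_gt0; nia.
Qed.

Theorem theorem1 :
  forall c : nat, 1 <= c ->
  exists (K : nat) (A : BeepAlgorithm),
  forall (V : finType) (e : rel V) (n Delta B : nat) (id : V -> nat) (m : V -> seq bool),
    simple_graph e ->
    #|V| = n ->
    Delta = max_degree e ->
    injective id ->
    (forall v, 1 <= id v <= n ^ c) ->
    0 < B ->
    (forall v, size (m v) <= B) ->
    solves_local_broadcast_in A e n c Delta id m (K * B * Delta ^ 2 * up_log 2 n).
Proof.
move=> c _; exists (36 * (c + 2)), local_broadcast.
move=> V e n _ B id m [e_sym e_irr] card_V -> id_inj id_range B_gt0 size_m v u e_vu.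
have deg_le (w : V) : #|nbhd e w| <= max_degree e by apply: leq_bigmax.
have id_le (w : V) : id w <= n ^ c by case/andP: (id_range w).
have u_v : u != v by apply: contraTneq e_vu => ->; rewrite e_irr.
have Δ_gt0 : 0 < max_degree e.
  by apply: leq_trans (deg_le u); apply/card_gt0P; exists v; rewrite inE e_sym.
have n_gt1 : 1 < n by rewrite -card_V; have := max_card [set u; v]; rewrite cards2 u_v.
apply: local_broadcast_delivers => //.
apply: leq_trans (frame_length_bound c B_gt0 Δ_gt0 n_gt1).
by rewrite leq_mul2r ltnS leq_double size_m orbT.
Qed.
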